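(* For a ring $R$, the following are equivalent: (1) $R$ is a DT ring; (2) $R$ is a semi-tripotent ring; (3) for every $a\in R$ there exist an idempotent $e\in R$ and $j\in J(R)$ such that $a^2=e+j$.
   Context: All rings are associative with identity. $J(R)$ is the Jacobson radical, $U(R)$ the group of units. $\Delta(R)=\{x\in R: x+u\in U(R)\text{ for all }u\in U(R)\}$. $\mathrm{Tr}(R)=\{x\in R: x^3=x\}$. A ring $R$ is a DT ring if every $r\in R$ can be written $r=e+d$ with $e\in\mathrm{Tr}(R)$ and $d\in\Delta(R)$. A ring $R$ is semi-tripotent if every $r\in R$ can be written $r=e+j$ with $e\in\mathrm{Tr}(R)$ and $j\in J(R)$. *)

From mathcomp Require Import all_boot all_algebra.
Set Implicit Arguments. Unset Strict Implicit. Unset Printing Implicit Defensive.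
Import GRing.Theory.
Local Open Scope ring_scope.

(* Rings: MathComp [pzRingType] (associative, with identity; zero ring allowed). *)

Definition is_unit (R : pzRingType) (x : R) : Prop :=
  exists y : R, x * y = 1 /\ y * x = 1.

(* J(R): the Jacobson radical, via the standard characterization
   x \in J(R) <-> 1 - r x is a unit for every r \in R. *)
Definition in_jacobson (R : pzRingType) (x : R) : Prop :=
  forall r : R, is_unit (1 - r * x).

Definition in_Delta (R : pzRingType) (x : R) : Prop :=
  forall u : R, is_unit u -> is_unit (x + u).

Definition tripotent (R : pzRingType) (x : R) : Prop := x ^+ 3 = x.

Definition idempotent (R : pzRingType) (x : R) : Prop := x * x = x.

Definition DT_ring (R : pzRingType) : Prop :=
  forall r : R, exists e d : R, tripotent e /\ in_Delta d /\ r = e + d.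

Definition semi_tripotent (R : pzRingType) : Prop :=
  forall r : R, exists e j : R, tripotent e /\ in_jacobson j /\ r = e + j.

Definition sq_idem_plus_J (R : pzRingType) : Prop :=
  forall a : R, exists e j : R, idempotent e /\ in_jacobson j /\ a ^+ 2 = e + j.

(* Since J(R) is contained in Delta(R), (2) implies (1).  Conversely, in a DT
   ring a tripotent e is u - g with u = 1 + e - e^2 a unit and g = 1 - e^2 an
   idempotent; as Delta(R) is closed under products and under left
   multiplication by units and idempotents, r Delta(R) is contained in Delta(R)
   for every r, so Delta(R) = J(R).  Squaring e + j gives (2) => (3).  For
   (3) => (2), the ring R/J(R) satisfies x^4 = x^2 and is semiprimitive.  Such a
   ring has no nonzero 2 x 2 matrix units, hence is reduced; then x^3 = x and
   6 = 0, and x = (2x^2 - x) - (2x^2 - 2x) is a difference of orthogonal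
   idempotents.  By (3) idempotents lift modulo J(R), and a lift of an
   orthogonal pair can be made orthogonal, which yields a tripotent lift of x. *)

From Pilot Require Import Defs.
From HB Require Import structures.
From mathcomp Require Import all_boot all_algebra.
From mathcomp Require Import ring.
From Stdlib Require Import ClassicalEpsilon.
Set Implicit Arguments. Unset Strict Implicit. Unset Printing Implicit Defensive.
Import GRing.Theory.
Local Open Scope ring_scope.
Local Open Scope quotient_scope.

Section Units.
Variable R : pzRingType.
Implicit Types a b n u v w : R.

Lemma is_unit1 : is_unit (1 : R). Proof. by exists 1; rewrite mulr1. Qed.

Lemma is_unitM u v : is_unit u -> is_unit v -> is_unit (u * v).
Proof.
move=> [u' [uu' u'u]] [v' [vv' v'v]]; exists (v' * u'); split.
  by rewrite -mulrA (mulrA v) vv' mul1r uu'.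
by rewrite -mulrA (mulrA u') u'u mul1r v'v.
Qed.

Lemma is_unitN u : is_unit u -> is_unit (- u).
Proof. by move=> [v [uv vu]]; exists (- v); rewrite !mulrNN uv vu. Qed.

Lemma is_unit_of_mulLR u w : is_unit (u * w) -> is_unit (w * u) -> is_unit u.
Proof.
move=> [t [uwt tuw]] [s [wus swu]].
have swt : s * w = w * t by rewrite -[s * w]mulr1 -uwt !mulrA -(mulrA s) swu mul1r.
by exists (w * t); split; [rewrite mulrA | rewrite -swt -mulrA swu].
Qed.

Lemma is_unit1D_sqr0 n : n * n = 0 -> is_unit (1 + n).
Proof.
move=> nn; exists (1 - n); split.
  by rewrite mulrDl mul1r mulrBr mulr1 nn subr0 subrK.
by rewrite mulrBl mul1r mulrDr mulr1 nn addr0 addrK.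
Qed.

(* If [v] inverts [1 - a b], then [1 + b v a] inverts [1 - b a]. *)
Lemma is_unit1B_swap a b : is_unit (1 - a * b) -> is_unit (1 - b * a).
Proof.
move=> [v []]; rewrite mulrBl mulrBr mul1r mulr1 => vl vr.
have abv : a * b * v = v - 1 by rewrite -vl opprB addrC subrK.
have vab : v * a * b = v - 1 by rewrite -mulrA -vr opprB addrC subrK.
have ab_bva : b * a * (b * v * a) = b * v * a - b * a.
  have -> : b * a * (b * v * a) = b * (a * b * v) * a by rewrite !mulrA.
  by rewrite abv mulrBr mulrBl mulr1.
have bva_ba : b * v * a * (b * a) = b * v * a - b * a.
  have -> : b * v * a * (b * a) = b * (v * a * b) * a by rewrite !mulrA.
  by rewrite vab mulrBr mulrBl mulr1.
exists (1 + b * v * a); split.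
  rewrite mulrDr mulr1 mulrBl mul1r ab_bva opprB.
  by rewrite [b * v * a + _]addrCA subrr addr0 subrK.
by rewrite mulrBr mulr1 mulrDl mul1r bva_ba [b * a + _]addrCA subrr addr0 addrK.
Qed.

End Units.
Arguments is_unit1 {R}.

Section Radicals.
Variable R : pzRingType.
Implicit Types a b d e f g j r u v w x : R.

Lemma in_jacobson0 : in_jacobson (0 : R).
Proof. by move=> r; rewrite mulr0 subr0; exact: is_unit1. Qed.

Lemma in_jacobsonMl r x : in_jacobson x -> in_jacobson (r * x).
Proof. by move=> Jx s; rewrite mulrA. Qed.

Lemma in_jacobsonMr r x : in_jacobson x -> in_jacobson (x * r).
Proof. by move=> Jx s; rewrite mulrA; apply: is_unit1B_swap; rewrite mulrA. Qed.

Lemma in_jacobsonN x : in_jacobson x -> in_jacobson (- x).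
Proof. by move=> Jx r; rewrite mulrN -mulNr. Qed.

Lemma is_unitDjacobson u j : is_unit u -> in_jacobson j -> is_unit (u + j).
Proof.
move=> Uu Jj; have [u' [uu' _]] := Uu.
have -> : u + j = u * (1 - (- u') * j).
  by rewrite mulNr opprK mulrDr mulr1 mulrA uu' mul1r.
exact: is_unitM Uu (Jj _).
Qed.

Lemma in_jacobsonD x y : in_jacobson x -> in_jacobson y -> in_jacobson (x + y).
Proof.
move=> Jx Jy r; rewrite mulrDr opprD addrA.
exact: is_unitDjacobson (Jx r) (in_jacobsonN (in_jacobsonMl r Jy)).
Qed.

Lemma in_jacobsonB x y : in_jacobson x -> in_jacobson y -> in_jacobson (x - y).
Proof. by move=> Jx Jy; apply: in_jacobsonD Jx (in_jacobsonN Jy). Qed.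

Lemma in_jacobson_Delta j : in_jacobson j -> in_Delta j.
Proof. by move=> Jj u Uu; rewrite addrC; exact: is_unitDjacobson. Qed.

Lemma in_DeltaN d : in_Delta d -> in_Delta (- d).
Proof. by move=> Dd u /is_unitN/Dd/is_unitN; rewrite opprD opprK. Qed.

Lemma in_DeltaD a b : in_Delta a -> in_Delta b -> in_Delta (a + b).
Proof. by move=> Da Db u Uu; rewrite -addrA; apply/Da/Db. Qed.

Lemma in_DeltaB a b : in_Delta a -> in_Delta b -> in_Delta (a - b).
Proof. by move=> Da Db; apply: in_DeltaD Da (in_DeltaN Db). Qed.

Lemma is_unitDDelta u d : is_unit u -> in_Delta d -> is_unit (u + d).
Proof. by move=> Uu Dd; rewrite addrC; apply: Dd. Qed.

Lemma is_unit1BDelta d : in_Delta d -> is_unit (1 - d).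
Proof. by move=> Dd; exact: is_unitDDelta is_unit1 (in_DeltaN Dd). Qed.

Lemma in_DeltaMl_unit w d : is_unit w -> in_Delta d -> in_Delta (w * d).
Proof.
move=> Uw Dd v Uv; have [w' [ww' w'w]] := Uw.
have -> : w * d + v = w * (d + w' * v) by rewrite mulrDr mulrA ww' mul1r.
by apply/(is_unitM Uw)/Dd/is_unitM => //; exists w.
Qed.

Lemma in_DeltaMr_unit w d : is_unit w -> in_Delta d -> in_Delta (d * w).
Proof.
move=> Uw Dd v Uv; have [w' [ww' w'w]] := Uw.
have -> : d * w + v = (d + v * w') * w by rewrite mulrDl -mulrA w'w mulr1.
by apply: is_unitM Uw; apply/Dd/(is_unitM Uv); exists w.
Qed.

Lemma in_DeltaM a b : in_Delta a -> in_Delta b -> in_Delta (a * b).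
Proof.
move=> Da Db u Uu; have [u' [uu' u'u]] := Uu.
have Uu' : is_unit u' by exists u.
have abu' : a - a * (1 - b * u') = a * b * u'.
  by rewrite mulrBr mulr1 opprB addrC subrK mulrA.
have -> : a * b + u = (1 + a - a * (1 - b * u')) * u.
  by rewrite -addrA abu' mulrDl mul1r -!mulrA u'u mulr1 addrC.
apply: (is_unitM _ Uu); apply: is_unitDDelta.
  by rewrite addrC; apply: Da is_unit1.
exact/in_DeltaN/(in_DeltaMr_unit _ Da)/is_unit1BDelta/(in_DeltaMr_unit Uu' Db).
Qed.

(* For [g] idempotent and [h = 1 - g], both [(1 - g d)(1 - h d)] and
   [(1 - h d)(1 - g d)] are [1 - d] plus an element of Delta, because [g d h]
   and [h d g] square to zero. *)
Lemma is_unit1B_idemDelta g d : g * g = g -> in_Delta d -> is_unit (1 - g * d).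
Proof.
move=> gg Dd; set h := 1 - g.
have unit_prod x y : y * x = 0 -> x + y = 1 -> is_unit ((1 - x * d) * (1 - y * d)).
  move=> yx xy1.
  have xdyd : (1 + x * d * y) * d - d = x * d * (y * d).
    by rewrite mulrDl mul1r addrAC subrr add0r !mulrA.
  have -> : (1 - x * d) * (1 - y * d) = 1 - d + ((1 + x * d * y) * d - d).
    have -> : 1 - d = 1 - x * d - y * d by rewrite -addrA -opprD -mulrDl xy1 mul1r.
    rewrite xdyd mulrBl mul1r mulrBr mulr1 opprB addrA addrAC.
    by congr (_ + _); rewrite addrAC.
  apply: is_unitDDelta (is_unit1BDelta Dd) _.
  apply/(in_DeltaB _ Dd)/(in_DeltaMl_unit _ Dd)/is_unit1D_sqr0.
  by rewrite -!mulrA (mulrA y x) yx mul0r !mulr0.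
apply: (is_unit_of_mulLR (w := 1 - h * d)); apply: unit_prod.
- by rewrite /h mulrBl mul1r gg subrr.
- by rewrite /h addrC subrK.
- by rewrite /h mulrBr mulr1 gg subrr.
- by rewrite /h subrK.
Qed.

Lemma in_DeltaMl_idem g d : g * g = g -> in_Delta d -> in_Delta (g * d).
Proof.
move=> gg Dd v Uv; have [v' [vv' v'v]] := Uv.
have -> : g * d + v = (1 - g * (- (d * v'))) * v.
  by rewrite mulrN opprK mulrDl mul1r -!mulrA v'v mulr1 addrC.
apply: (is_unitM _ Uv); apply/is_unit1B_idemDelta/in_DeltaN/in_DeltaMr_unit => //.
by exists v.
Qed.

Lemma tripotent_unitB_idem e : tripotent e ->
  exists u g, [/\ is_unit u, g * g = g & e = u - g].
Proof.
rewrite /tripotent !exprS expr0 mulr1 => eee; set f := e * e.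
have fe : f * e = e by rewrite -mulrA.
have ff : f * f = f by rewrite -mulrA eee.
have sqr_eBf : (e - f) * (e - f) = - (e - f) - (e - f).
  by rewrite mulrBl !mulrBr fe eee ff opprB.
exists (1 + (e - f)), (1 - f); split.
- exists (1 + (e - f)); split; rewrite mulrDl mul1r mulrDr mulr1 sqr_eBf;
    by rewrite (addrA (e - f)) subrr add0r addrK.
- by rewrite mulrBl mul1r mulrBr mulr1 ff subrr subr0.
- by rewrite opprB [1 + _]addrC -addrA (addrCA 1) subrr addr0 subrK.
Qed.

Lemma tripotentB_orth_idem e f :
  e * e = e -> f * f = f -> e * f = 0 -> f * e = 0 -> tripotent (e - f).
Proof.
move=> ee ff ef fe; have sqr_eBf : (e - f) * (e - f) = e + f.
  by rewrite mulrBl !mulrBr ee ff ef fe sub0r subr0 opprK.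
by rewrite /tripotent !exprS expr0 mulr1 sqr_eBf mulrBl !mulrDr ee ff ef fe addr0 add0r.
Qed.

End Radicals.

Lemma DT_Delta_jacobson (R : pzRingType) (d : R) :
  DT_ring R -> in_Delta d -> in_jacobson d.
Proof.
move=> DT_R Dd r; apply: is_unit1BDelta.
have [e [d' [tri_e [Dd' ->]]]] := DT_R r; rewrite mulrDl.
have [u [g [Uu gg ->]]] := tripotent_unitB_idem tri_e; rewrite mulrBl.
apply: in_DeltaD (in_DeltaM Dd' Dd).
exact: in_DeltaB (in_DeltaMl_unit Uu Dd) (in_DeltaMl_idem gg Dd).
Qed.

Lemma DT_semi_tripotent (R : pzRingType) : DT_ring R -> semi_tripotent R.
Proof.
move=> DT_R r; have [e [d [tri_e [Dd ->]]]] := DT_R r.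
by exists e, d; split; [|split; first exact: DT_Delta_jacobson].
Qed.

Lemma semi_tripotent_DT (R : pzRingType) : semi_tripotent R -> DT_ring R.
Proof.
move=> semiR r; have [e [j [tri_e [Jj ->]]]] := semiR r.
by exists e, j; split; [|split; first exact: in_jacobson_Delta].
Qed.

Lemma semi_tripotent_sqr (R : pzRingType) : semi_tripotent R -> sq_idem_plus_J R.
Proof.
move=> semiR a; have [e [j [tri_e [Jj ->]]]] := semiR a.
exists (e * e), (e * j + j * (e + j)); split; last split.
- by move: tri_e; rewrite /Defs.idempotent /tripotent -mulrA !exprS expr0 mulr1 => ->.
- exact: in_jacobsonD (in_jacobsonMl _ Jj) (in_jacobsonMr _ Jj).
- by rewrite expr2 mulrDl mulrDr addrA.
Qed.

Section IdempotentLifting.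
Variable R : pzRingType.
Implicit Types e f g : R.

Lemma idem_orthl_lift e g : e * e = e -> g * g = g -> in_jacobson (e * g) ->
  exists f, [/\ f * f = f, e * f = 0 & in_jacobson (f - g)].
Proof.
move=> ee gg Jeg; set v := 1 - e * g.
have [v' [vv' v'v]] : is_unit v by have := Jeg 1; rewrite mul1r.
exists (v * g * v'); split.
- by rewrite -!mulrA (mulrA v' v) v'v mul1r (mulrA g) gg.
- have evg : e * v * g = 0.
    by rewrite mulrBr mulr1 mulrA ee mulrBl -(mulrA e g g) gg subrr.
  by rewrite !mulrA evg !mul0r.
- have -> : v * g * v' - g = (v * g - g * v) * v'.
    by rewrite [RHS]mulrBl -(mulrA g v v') vv' mulr1.
  apply: in_jacobsonMr.
  have -> : v * g - g * v = g * (e * g) - e * g.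
    by rewrite mulrBl mulrBr mul1r mulr1 -(mulrA e g g) gg opprB addrC addrA subrK.
  exact: in_jacobsonB (in_jacobsonMl _ Jeg) Jeg.
Qed.

Lemma idem_orth_lift e g : e * e = e -> g * g = g -> in_jacobson (e * g) ->
  exists f, [/\ f * f = f, e * f = 0, f * e = 0 & in_jacobson (f - (g - g * e))].
Proof.
move=> ee gg Jeg; have [f [ff ef Jfg]] := idem_orthl_lift ee gg Jeg.
exists (f - f * e); split.
- have fef : f * e * f = 0 by rewrite -mulrA ef mulr0.
  by rewrite mulrBl !mulrBr fef mulrA ff mulrA fef mul0r !subr0.
- by rewrite mulrBr mulrA ef mul0r subrr.
- by rewrite mulrBl -mulrA ee subrr.
- have -> : f - f * e - (g - g * e) = (f - g) - (f - g) * e.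
    by rewrite mulrBl opprB opprD opprK !addrA addrAC [_ - g]addrAC.
  exact: in_jacobsonB Jfg (in_jacobsonMr _ Jfg).
Qed.

End IdempotentLifting.

Section JacobsonQuotient.
Variable R : pzRingType.
Implicit Types x y : R.

(* Classical choice turns membership in J(R) into the boolean predicate that
   [Quotient.quot] needs. *)
Definition jacobson_pred : {pred R} :=
  fun x => if excluded_middle_informative (in_jacobson x) then true else false.

Lemma jacobson_predP x : reflect (in_jacobson x) (x \in jacobson_pred).
Proof.
by rewrite unfold_in /jacobson_pred; case: excluded_middle_informative; constructor.
Qed.

Fact jacobson_pred_zmod_closed : zmod_closed jacobson_pred.
Proof.
split=> [|x y /jacobson_predP Jx /jacobson_predP Jy]; apply/jacobson_predP.
  exact: in_jacobson0.
exact: in_jacobsonB.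
Qed.

HB.instance Definition _ :=
  GRing.isZmodClosed.Build R jacobson_pred jacobson_pred_zmod_closed.

Definition jacobson_quot := Quotient.quot jacobson_pred.
HB.instance Definition _ := GRing.Zmodule.on jacobson_quot.

Lemma jacobson_quot_eq x y : \pi_jacobson_quot x = \pi y <-> in_jacobson (x - y).
Proof. by rewrite (rwP eqP) piE Quotient.equivE (rwP (jacobson_predP _)). Qed.

Definition jacobson_quot_mul := lift_op2 jacobson_quot *%R.

Lemma pi_jacobson_quot_mul :
  {morph \pi_jacobson_quot : x y / x * y >-> jacobson_quot_mul x y}.
Proof.
move=> x y; unlock jacobson_quot_mul; apply/jacobson_quot_eq.
set x' := repr _; set y' := repr _.
have Jx : in_jacobson (x - x') by apply/jacobson_quot_eq; rewrite reprK.
have Jy : in_jacobson (y - y') by apply/jacobson_quot_eq; rewrite reprK.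
have -> : x * y - x' * y' = (x - x') * y + x' * (y - y').
  by rewrite mulrBl mulrBr addrA subrK.
exact: in_jacobsonD (in_jacobsonMr _ Jx) (in_jacobsonMl _ Jy).
Qed.
Canonical pi_jacobson_quot_mul_morph := PiMorph2 pi_jacobson_quot_mul.

Let one : jacobson_quot := \pi 1.

Fact jacobson_quot_mulA : associative jacobson_quot_mul.
Proof. by move=> a b c; rewrite -[a]reprK -[b]reprK -[c]reprK !piE mulrA. Qed.

Fact jacobson_quot_mul1q : left_id one jacobson_quot_mul.
Proof. by move=> a; rewrite -[a]reprK !piE mul1r. Qed.

Fact jacobson_quot_mulq1 : right_id one jacobson_quot_mul.
Proof. by move=> a; rewrite -[a]reprK !piE mulr1. Qed.

Fact jacobson_quot_mulDl : left_distributive jacobson_quot_mul +%R.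
Proof. by move=> a b c; rewrite -[a]reprK -[b]reprK -[c]reprK !piE mulrDl. Qed.

Fact jacobson_quot_mulDr : right_distributive jacobson_quot_mul +%R.
Proof. by move=> a b c; rewrite -[a]reprK -[b]reprK -[c]reprK !piE mulrDr. Qed.

HB.instance Definition _ := GRing.Zmodule_isPzRing.Build jacobson_quot
  jacobson_quot_mulA jacobson_quot_mul1q jacobson_quot_mulq1
  jacobson_quot_mulDl jacobson_quot_mulDr.

End JacobsonQuotient.

Section JacobsonProjection.
Variable R : pzRingType.

Definition jacobson_proj (x : R) : jacobson_quot R := \pi x.

Fact jacobson_proj_zmod_morphism : zmod_morphism jacobson_proj.
Proof. by move=> x y; rewrite /jacobson_proj !piE. Qed.

Fact jacobson_proj_monoid_morphism : monoid_morphism jacobson_proj.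
Proof. by split=> // x y; rewrite /jacobson_proj piE. Qed.

HB.instance Definition _ := GRing.isZmodMorphism.Build R (jacobson_quot R)
  jacobson_proj jacobson_proj_zmod_morphism.
HB.instance Definition _ := GRing.isMonoidMorphism.Build R (jacobson_quot R)
  jacobson_proj jacobson_proj_monoid_morphism.

Lemma jacobson_proj_eq (x y : R) :
  jacobson_proj x = jacobson_proj y <-> in_jacobson (x - y).
Proof. exact: jacobson_quot_eq. Qed.

Lemma jacobson_proj_surj (z : jacobson_quot R) : exists x, jacobson_proj x = z.
Proof. by exists (repr z); rewrite /jacobson_proj reprK. Qed.

Lemma is_unit_of_proj (x : R) : is_unit (jacobson_proj x) -> is_unit x.
Proof.
have unit_of_proj1 y : jacobson_proj y = 1 -> is_unit y.
  rewrite -(rmorph1 jacobson_proj) => /jacobson_proj_eq Jy1.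
  by rewrite -[y](subrK 1) addrC; apply: is_unitDjacobson is_unit1 Jy1.
move=> [w' []]; have [w <-] := jacobson_proj_surj w'; rewrite -!rmorphM.
by move=> /unit_of_proj1 Uxw /unit_of_proj1 Uwx; apply: is_unit_of_mulLR Uxw Uwx.
Qed.

Lemma jacobson_quot_semiprimitive (z : jacobson_quot R) : in_jacobson z -> z = 0.
Proof.
have [x <-] := jacobson_proj_surj z => Jz; rewrite -(rmorph0 jacobson_proj).
apply/jacobson_proj_eq; rewrite subr0 => r; apply: is_unit_of_proj.
by rewrite rmorphB rmorph1 rmorphM; apply: Jz.
Qed.

End JacobsonProjection.

Section TripotentDecomposition.
Variable T : nzRingType.
Hypothesis expr4T : forall z : T, z ^+ 4 = z ^+ 2.
Hypothesis semiprimitiveT : forall z : T, in_jacobson z -> z = 0.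
Implicit Types a c x z : T.

(* In [M_2], [b = e12 + e21 + e22] has [b^4 <> b^2]; compressing by [p = ac]
   gives [p b^2 p = p] but [p b^4 p = 2 p]. *)
Lemma matrix_units_eq0 (a c : T) :
  a * a = 0 -> c * c = 0 -> a * c * a = a -> c * a * c = c -> a * c = 0.
Proof.
move=> aa cc aca cac; set p := a * c; set b := a + c + c * a.
have pa : p * a = a by [].
have cp : c * p = c by rewrite mulrA.
have pc : p * c = 0 by rewrite -mulrA cc mulr0.
have ap : a * p = 0 by rewrite mulrA aa mul0r.
have pp : p * p = p by rewrite mulrA pa.
have pb : p * b = a by rewrite !mulrDr pa pc mulrA pc mul0r !addr0.
have bp : b * p = c by rewrite !mulrDl ap cp -mulrA ap mulr0 add0r addr0.
have ab : a * b = p + a by rewrite !mulrDr aa add0r mulrA aca.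
have bc : b * c = p + c by rewrite !mulrDl cc addr0 cac.
have pb2p : p * b ^+ 2 * p = p by rewrite expr2 mulrA pb -mulrA bp.
have pb4p : p * b ^+ 4 * p = p + p.
  have -> : p * b ^+ 4 * p = (p * b) * b * (b * (b * p)).
    by rewrite !exprS expr0 mulr1 !mulrA.
  by rewrite pb bp ab bc mulrDl !mulrDr pp pc ap addr0 add0r.
by apply: (addrI p); rewrite addr0 -[RHS]pb2p -expr4T pb4p.
Qed.

Lemma sqr_eq0 (x : T) : x * x = 0 -> x = 0.
Proof.
move=> xx; apply: semiprimitiveT => r; rewrite -mulNr.
apply: is_unit1D_sqr0; rewrite mulNr mulrNN.
set w := r * x * r; set p := r * x * (r * x).
have pp : p * p = p by rewrite /p -(expr2 (r * x)) -exprD expr4T.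
have px : p * x = 0 by rewrite /p -!mulrA xx !mulr0.
have wx : w * x = p by rewrite /p mulrA.
clearbody w p.
have p1p : (1 - p) * p = 0 by rewrite mulrBl mul1r pp subrr.
have ac : p * w * (1 - p) * (x * p) = p.
  by rewrite -mulrA mulrBl mul1r mulrA px mul0r subr0 mulrA -(mulrA p w x) wx !pp.
rewrite -ac; apply: matrix_units_eq0.
- by rewrite -!mulrA (mulrA (1 - p)) p1p mul0r !mulr0.
- by rewrite -mulrA (mulrA p) px mul0r mulr0.
- by rewrite ac !mulrA pp.
- by rewrite -mulrA ac -mulrA pp.
Qed.

Fact commr_intr (z : T) : commr_rmorph (intr : int -> T) z.
Proof. by move=> n; apply: commr_int. Qed.

Local Notation ev z := (horner_morph (commr_intr z)).
Let evE := (rmorph_nat, rmorphB, rmorphD, rmorphXn, rmorphM).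

Lemma ev_comb z (G H A B P : {poly int}) :
  ev z G = 0 -> ev z H = 0 -> P = A * G + B * H -> ev z P = 0.
Proof. by move=> G0 H0 ->; rewrite rmorphD !rmorphM /= G0 H0 !mulr0 addr0. Qed.

Lemma expr3_id z : z ^+ 3 = z.
Proof.
apply/eqP; rewrite eq_sym -subr_eq0; apply/eqP/sqr_eq0.
have G4 : ev z ('X^4 - 'X^2 : {poly int}) = 0.
  by rewrite !evE /= horner_morphX expr4T subrr.
have := @ev_comb z _ _ ('X^2 - 1) 0 (('X - 'X^3) * ('X - 'X^3)) G4 G4.
by rewrite !evE /= horner_morphX; apply; ring.
Qed.

Lemma ev_X3BX z : ev z ('X^3 - 'X : {poly int}) = 0.
Proof. by rewrite !evE /= horner_morphX expr3_id subrr. Qed.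

Lemma natr6_eq0 : 6%:R = 0 :> T.
Proof.
by apply: (addIr 2%:R); rewrite add0r -natrD -[in RHS](expr3_id 2%:R) -natrX.
Qed.

Lemma natr3_sqrB z : 3%:R * (z ^+ 2 - z) = 0.
Proof.
apply: sqr_eq0.
have G6 : ev z (6%:R : {poly int}) = 0 by rewrite !evE natr6_eq0.
have := @ev_comb z _ _ (9%:R * ('X - 2%:R)) (3%:R * ('X^2 - 'X))
  ((3%:R * ('X^2 - 'X)) * (3%:R * ('X^2 - 'X))) (ev_X3BX z) G6.
by rewrite !evE /= horner_morphX; apply; ring.
Qed.

(* Since [6 = 0], [T] is a product of parts of characteristic 2 and 3, and
   [2 z^2 - z], [2 z^2 - 2 z] are the positive and negative parts of [z] in both. *)
Lemma nz_sub_orth_idem z :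
  exists e f : T, [/\ e * e = e, f * f = f, e * f = 0, f * e = 0 & z = e - f].
Proof.
have G33 : ev z (3%:R * ('X^2 - 'X) : {poly int}) = 0.
  by rewrite !evE /= horner_morphX natr3_sqrB.
have vanish P A B : P = A * ('X^3 - 'X) + B * (3%:R * ('X^2 - 'X)) -> ev z P = 0.
  exact: ev_comb (ev_X3BX z) G33.
exists (ev z (2%:R * 'X^2 - 'X)), (ev z (2%:R * 'X^2 - 2%:R * 'X)); split.
- apply/eqP; rewrite -subr_eq0 -rmorphM -rmorphB.
  by apply/eqP/(vanish _ (4%:R * 'X - 4%:R) 1); ring.
- apply/eqP; rewrite -subr_eq0 -rmorphM -rmorphB.
  by apply/eqP/(vanish _ (4%:R * 'X - 8%:R) 2%:R); ring.
- by rewrite -rmorphM; apply: (vanish _ (4%:R * 'X - 6%:R) 2%:R); ring.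
- by rewrite -rmorphM; apply: (vanish _ (4%:R * 'X - 6%:R) 2%:R); ring.
- apply/esym/eqP; rewrite -subr_eq0 -[z in _ - z](horner_morphX (commr_intr z)).
  by rewrite -!rmorphB; apply/eqP/(vanish _ 0 0); ring.
Qed.

End TripotentDecomposition.

(* Polynomial evaluation [horner_morph] requires a nontrivial target ring. *)
Definition nz_ring (T : pzRingType) of (1 : T) != 0 : Type := T.
HB.instance Definition _ (T : pzRingType) (T1 : (1 : T) != 0) :=
  GRing.PzRing.on (nz_ring T1).
HB.instance Definition _ (T : pzRingType) (T1 : (1 : T) != 0) :=
  GRing.PzSemiRing_isNonZero.Build (nz_ring T1) T1.

Lemma sub_orth_idem (T : pzRingType) :
  (forall z : T, z ^+ 4 = z ^+ 2) -> (forall z : T, in_jacobson z -> z = 0) ->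
  forall z : T, exists e f, [/\ e * e = e, f * f = f, e * f = 0, f * e = 0 & z = e - f].
Proof.
move=> expr4T semiprimitiveT z; case: (eqVneq (1 : T) 0) => [T0 | T1].
  by exists 0, 0; rewrite !mulr0 subr0 -[z]mulr1 T0 mulr0.
exact: (@nz_sub_orth_idem (nz_ring T1) expr4T semiprimitiveT z).
Qed.

Section SqrIdempotentModJacobson.
Variable R : pzRingType.
Hypothesis sqrR : sq_idem_plus_J R.

Lemma proj_sqr_idem (a : R) :
  exists e, e * e = e /\ jacobson_proj (a ^+ 2) = jacobson_proj e.
Proof.
have [e [j [ee [Jj ->]]]] := sqrR a.
by exists e; split => //; apply/jacobson_proj_eq; rewrite addrAC subrr add0r.
Qed.

Lemma jacobson_quot_expr4 (z : jacobson_quot R) : z ^+ 4 = z ^+ 2.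
Proof.
have [a <-] := jacobson_proj_surj z; have [e [ee a2e]] := proj_sqr_idem a.
by rewrite (exprM _ 2 2) -rmorphXn /= a2e -rmorphXn /= expr2 ee.
Qed.

Lemma jacobson_quot_idem_lift (z : jacobson_quot R) :
  z * z = z -> exists e, e * e = e /\ jacobson_proj e = z.
Proof.
have [a <-] := jacobson_proj_surj z => zz; have [e [ee a2e]] := proj_sqr_idem a.
by exists e; split => //; rewrite -a2e rmorphXn expr2 zz.
Qed.

Lemma sqr_idem_semi_tripotent : semi_tripotent R.
Proof.
move=> a; have [E [F [EE FF EF FE aEF]]] := sub_orth_idem jacobson_quot_expr4
  (@jacobson_quot_semiprimitive R) (jacobson_proj a).
have [e [ee eE]] := jacobson_quot_idem_lift EE.
have [g [gg gF]] := jacobson_quot_idem_lift FF.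
have Jeg : in_jacobson (e * g).
  by rewrite -[e * g]subr0; apply/jacobson_proj_eq; rewrite rmorphM /= eE gF EF rmorph0.
have [f [ff ef fe /jacobson_proj_eq]] := idem_orth_lift ee gg Jeg.
rewrite !rmorphB rmorphM /= gF eE FE subr0 => fF.
exists (e - f), (a - (e - f)); split; first exact: tripotentB_orth_idem.
split; last by rewrite addrC subrK.
by apply/jacobson_proj_eq; rewrite rmorphB /= fF eE.
Qed.

End SqrIdempotentModJacobson.

Theorem theorem4p11 (R : pzRingType) :
  (DT_ring R <-> semi_tripotent R) /\ (semi_tripotent R <-> sq_idem_plus_J R).
Proof.
split; split.
- exact: DT_semi_tripotent.
- exact: semi_tripotent_DT.
- exact: semi_tripotent_sqr.
- exact: sqr_idem_semi_tripotent.
Qed.
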